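(* Let $n\geq 2$, $\lambda>n$, $\mu>n$, and $h(x,y)=(\lambda x,\mu y)$. Let $f:\mathbb{R}^2\to\mathbb{R}^2$ be an orientation preserving homeomorphism with bounded displacement (there is $K>0$ with $|f(p)-p|\leq K$ for all $p$) such that $hfh^{-1}=f^n$. Then $f=\mathrm{id}$. *)

From Stdlib Require Import Reals.
Open Scope R_scope.

Definition pt := (R * R)%type.

Definition dist2 (p q : pt) : R :=
  sqrt ((fst p - fst q) ^ 2 + (snd p - snd q) ^ 2).

Definition cont2 (f : pt -> pt) : Prop :=
  forall p eps, 0 < eps -> exists delta, 0 < delta /\
    forall q, dist2 q p < delta -> dist2 (f q) (f p) < eps.

Definition homeo2 (f : pt -> pt) : Prop :=
  cont2 f /\ exists g : pt -> pt, cont2 g /\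
    (forall p, g (f p) = p) /\ (forall p, f (g p) = p).

(* Orientation preserving (degree +1): for every point p and radius r > 0,
   the image under f of the positively oriented circle of radius r about p
   winds exactly once, positively, around f p; i.e. the loop
   t |-> f(p + r(cos 2πt, sin 2πt)) - f p, t in [0,1], admits a continuous
   polar lift (rho, theta), rho > 0, with theta 1 - theta 0 = 2π. *)
Definition orientation_preserving (f : pt -> pt) : Prop :=
  forall (p : pt) (r : R), 0 < r ->
    exists (rho theta : R -> R),
      (forall t, 0 <= t <= 1 -> continuity_pt theta t) /\
      (forall t, 0 <= t <= 1 ->
         0 < rho t /\
         let q := f (fst p + r * cos (2 * PI * t), snd p + r * sin (2 * PI * t)) in
         fst q - fst (f p) = rho t * cos (theta t) /\
         snd q - snd (f p) = rho t * sin (theta t)) /\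
      theta 1 - theta 0 = 2 * PI.

Fixpoint iter (n : nat) (f : pt -> pt) (p : pt) : pt :=
  match n with O => p | S k => f (iter k f p) end.

Definition hmap (lam mu : R) (p : pt) : pt := (lam * fst p, mu * snd p).
Definition hinv (lam mu : R) (p : pt) : pt := (fst p / lam, snd p / mu).

(** The scaling [h] conjugates [f] to [f^n], and [f^n] moves each coordinate
    at most [n] times as far as [f] does. Reading [h f = f^n h] coordinatewise,
    a bound [B] on the first-coordinate displacement of [f] therefore improves
    to [n B / lam], and likewise for the second coordinate with [mu]. Since
    [n < lam] and [n < mu], iterating from the bounded-displacement constant
    drives both displacements to zero. *)

From Stdlib Require Import Reals Lra.
Open Scope R_scope.

Lemma le_geometric_eq0 (x K c : R) :
  0 <= x -> 0 < K -> 0 <= c < 1 -> (forall m, x <= K * c ^ m) -> x = 0.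
Proof.
  intros Hx HK Hc Hle.
  destruct (Req_dec x 0) as [|Hx0]; [assumption | exfalso].
  destruct (pow_lt_1_zero c ltac:(rewrite Rabs_right; lra) (x / K))
    as [N HN]; [apply Rdiv_lt_0_compat; lra |].
  specialize (HN N (Nat.le_refl N)).
  rewrite Rabs_right in HN by (apply Rle_ge, pow_le; lra).
  apply (Rmult_lt_compat_l K) in HN; [| lra].
  replace (K * (x / K)) with x in HN by (field; lra).
  specialize (Hle N); lra.
Qed.

Lemma iter_displacement_le (f : pt -> pt) (g : pt -> R) (B : R) :
  (forall q, Rabs (g (f q) - g q) <= B) ->
  forall m p, Rabs (g (iter m f p) - g p) <= INR m * B.
Proof.
  intros HB m p; induction m as [|m IH]; cbn [iter].
  - rewrite Rminus_diag, Rabs_R0; simpl; lra.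
  - rewrite S_INR.
    replace (g (f (iter m f p)) - g p)
      with ((g (f (iter m f p)) - g (iter m f p)) + (g (iter m f p) - g p))
      by ring.
    eapply Rle_trans; [apply Rabs_triang |].
    specialize (HB (iter m f p)); lra.
Qed.

Section ScaledCoordinate.

Variables (f h : pt -> pt) (g : pt -> R) (n : nat) (s : R).
Hypothesis n_lt_s : INR n < s.
Hypothesis g_h : forall q, g (h q) = s * g q.
Hypothesis h_f : forall q, h (f q) = iter n f (h q).

Lemma displacement_contract (B : R) :
  (forall q, Rabs (g (f q) - g q) <= B) ->
  forall q, Rabs (g (f q) - g q) <= INR n / s * B.
Proof.
  intros HB q.
  assert (Hn := pos_INR n).
  assert (E : s * Rabs (g (f q) - g q) = Rabs (g (iter n f (h q)) - g (h q))).
  { rewrite <- h_f, !g_h, <- Rmult_minus_distr_l, Rabs_mult, (Rabs_right s)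
      by lra; reflexivity. }
  apply (Rmult_le_reg_l s); [lra |].
  replace (s * (INR n / s * B)) with (INR n * B) by (field; lra).
  rewrite E; exact (iter_displacement_le f g B HB n (h q)).
Qed.

Lemma coordinate_fixed (K : R) :
  0 < K -> (forall q, Rabs (g (f q) - g q) <= K) -> forall q, g (f q) = g q.
Proof.
  intros HK HB q.
  assert (Hn := pos_INR n).
  assert (Hc : 0 <= INR n / s < 1).
  { split.
    - unfold Rdiv; apply Rmult_le_pos; [lra |].
      left; apply Rinv_0_lt_compat; lra.
    - apply (Rmult_lt_reg_r s); [lra |]; field_simplify; lra. }
  assert (Hgeom : forall m q, Rabs (g (f q) - g q) <= K * (INR n / s) ^ m).
  { induction m as [|m IH]; intro q'; simpl.
    - rewrite Rmult_1_r; apply HB.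
    - replace (K * (INR n / s * (INR n / s) ^ m))
        with (INR n / s * (K * (INR n / s) ^ m)) by ring.
      exact (displacement_contract _ IH q'). }
  destruct (Req_dec (g (f q) - g q) 0) as [E | Hne]; [lra | exfalso].
  exact (Rabs_no_R0 _ Hne
    (le_geometric_eq0 _ K _ (Rabs_pos _) HK Hc (fun m => Hgeom m q))).
Qed.

End ScaledCoordinate.

Lemma abs_fst_le_dist2 (p q : pt) : Rabs (fst p - fst q) <= dist2 p q.
Proof.
  unfold dist2; rewrite <- sqrt_Rsqr_abs; apply sqrt_le_1_alt.
  assert (0 <= (snd p - snd q) ^ 2) by apply pow2_ge_0.
  unfold Rsqr; simpl in *; lra.
Qed.

Lemma abs_snd_le_dist2 (p q : pt) : Rabs (snd p - snd q) <= dist2 p q.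
Proof.
  unfold dist2; rewrite <- sqrt_Rsqr_abs; apply sqrt_le_1_alt.
  assert (0 <= (fst p - fst q) ^ 2) by apply pow2_ge_0.
  unfold Rsqr; simpl in *; lra.
Qed.

Lemma hinv_hmap (lam mu : R) (p : pt) :
  lam <> 0 -> mu <> 0 -> hinv lam mu (hmap lam mu p) = p.
Proof.
  intros Hl Hm; destruct p as [a b]; unfold hinv, hmap; simpl.
  f_equal; field; assumption.
Qed.

Theorem lemma3p3 (n : nat) (lam mu : R) (f : pt -> pt) :
  (2 <= n)%nat -> INR n < lam -> INR n < mu ->
  homeo2 f -> orientation_preserving f ->
  (exists K, 0 < K /\ forall p, dist2 (f p) p <= K) ->
  (forall p, hmap lam mu (f (hinv lam mu p)) = iter n f p) ->
  forall p, f p = p.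
Proof.
  intros _ Hl Hm _ _ [K [HK HD]] Hconj p.
  assert (Hn := pos_INR n).
  assert (Hsemi : forall q, hmap lam mu (f q) = iter n f (hmap lam mu q)).
  { intro q; rewrite <- Hconj, hinv_hmap by lra; reflexivity. }
  assert (E1 : fst (f p) = fst p).
  { apply (coordinate_fixed f (hmap lam mu) fst n lam Hl) with K;
      [reflexivity | exact Hsemi | exact HK |].
    intro q; eapply Rle_trans; [apply abs_fst_le_dist2 | apply HD]. }
  assert (E2 : snd (f p) = snd p).
  { apply (coordinate_fixed f (hmap lam mu) snd n mu Hm) with K;
      [reflexivity | exact Hsemi | exact HK |].
    intro q; eapply Rle_trans; [apply abs_snd_le_dist2 | apply HD]. }
  destruct (f p), p; simpl in *; subst; reflexivity.
Qed.
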